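(* Consider simultaneous double $Q$-learning (SDQ) on a finite MDP as described in the context, with constant step-size $\alpha\in(0,1)$, discount factor $\gamma\in(0,1)$, rewards bounded by $1$ in absolute value, i.i.d. sampling of state-action pairs from a distribution $d$ with $d(s,a)>0$ for all $(s,a)$, and initial estimators satisfying $\|Q_0^A\|_\infty\le 1$, $\|Q_0^B\|_\infty\le 1$. Let $d_{\min}=\min_{(s,a)}d(s,a)$ and $\rho=1-\alpha d_{\min}(1-\gamma)$. Then for every $k\ge 0$, \[ \mathbb{E}\big[\|Q_k^A-Q^*\|_\infty\big]\le \frac{120\,\alpha^{1/2}|\mathcal{S}\times\mathcal{A}|}{d_{\min}^{9/2}(1-\gamma)^{11/2}}+\frac{48\,|\mathcal{S}\times\mathcal{A}|^{3/2}}{1-\gamma}\cdot\frac{\rho^{-4}(-8)^4}{(\ln\rho)^4}\,\rho^{-4/\ln\rho}\,\rho^{k/2}, \] and the same bound holds for $\mathbb{E}[\|Q_k^B-Q^*\|_\infty]$.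
   Context: Finite MDP: state space $\mathcal{S}=\{1,\dots,|\mathcal{S}|\}$, action space $\mathcal{A}=\{1,\dots,|\mathcal{A}|\}$, transition probabilities $P(s'|s,a)$, deterministic reward $r(s,a,s')$ with $\max|r(s,a,s')|\le 1$, discount $\gamma\in(0,1)$; the MDP is assumed ergodic. $Q^*$ is the optimal action-value function. A behavior policy $\beta$ and a stationary state distribution $p$ give $d(s,a)=p(s)\beta(a|s)$, assumed $>0$ for all $(s,a)$. At each iteration $k=0,1,\dots$, $(s_k,a_k)$ is drawn independently from $d$, $s_{k+1}$ is drawn from $P(\cdot|s_k,a_k)$, and $r_{k+1}=r(s_k,a_k,s_{k+1})$. SDQ maintains two tables $Q_k^A,Q_k^B:\mathcal{S}\times\mathcal{A}\to\mathbb{R}$ and updates only the entry $(s_k,a_k)$ of each (other entries unchanged): $Q_{k+1}^A(s_k,a_k)=Q_k^A(s_k,a_k)+\alpha\{r_{k+1}+\gamma Q_k^A(s_{k+1},\arg\max_{a}Q_k^B(s_{k+1},a))-Q_k^A(s_k,a_k)\}$, $Q_{k+1}^B(s_k,a_k)=Q_k^B(s_k,a_k)+\alpha\{r_{k+1}+\gamma Q_k^B(s_{k+1},\arg\max_{a}Q_k^A(s_{k+1},a))-Q_k^B(s_k,a_k)\}$, with constant step-size $\alpha\in(0,1)$. $|\mathcal{S}\times\mathcal{A}|=|\mathcal{S}||\mathcal{A}|$. *)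

From HB Require Import structures.
From mathcomp Require Import all_boot all_order all_algebra.
From mathcomp Require Import all_classical all_reals all_analysis.
Set Implicit Arguments. Unset Strict Implicit. Unset Printing Implicit Defensive.
Import Order.TTheory GRing.Theory Num.Theory.
Local Open Scope ring_scope.

Section SDQ.
Variables (R : realType) (S A : finType).

Definition supnorm (Q : S -> A -> R) : R :=
  \big[Num.max/0]_(sa : S * A) `|Q sa.1 sa.2|.

Definition is_distr (p : S -> R) := (forall s, 0 <= p s) /\ \sum_s p s = 1.
Definition is_policy (beta : S -> A -> R) :=
  forall s, (forall a, 0 <= beta s a) /\ \sum_a beta s a = 1.
Definition is_kernel (P : S -> A -> S -> R) :=
  forall s a, (forall s', 0 <= P s a s') /\ \sum_s' P s a s' = 1.

Definition Pbeta (P : S -> A -> S -> R) (beta : S -> A -> R) (s s' : S) : R :=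
  \sum_a beta s a * P s a s'.

Fixpoint Pbeta_n (P : S -> A -> S -> R) (beta : S -> A -> R) (n : nat) (s s' : S) : R :=
  match n with
  | 0 => (s == s')%:R
  | n'.+1 => \sum_u Pbeta_n P beta n' s u * Pbeta P beta u s'
  end.

(* ergodic (irreducible and aperiodic) finite chain: some power is positive *)
Definition ergodic_chain (P : S -> A -> S -> R) (beta : S -> A -> R) :=
  exists n, forall s s', 0 < Pbeta_n P beta n s s'.

Definition stationary (P : S -> A -> S -> R) (beta : S -> A -> R) (p : S -> R) :=
  forall s', p s' = \sum_s p s * Pbeta P beta s s'.

(* Q* : the optimal action-value function, i.e. the (unique) solution of the
   Bellman optimality equation; max_{a'} Q(s',a') is written as a big max
   seeded with the element Q(s',a) of the same finite set *)
Definition bellman_optimal (P : S -> A -> S -> R) (r : S -> A -> S -> R)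
  (gamma : R) (Qs : S -> A -> R) :=
  forall s a, Qs s a = \sum_s' P s a s' *
    (r s a s' + gamma * \big[Num.max/Qs s' a]_a' Qs s' a').

(* one SDQ update with the sample (s_k, a_k, s_{k+1});
   sel F is the (tie-broken) argmax of F : A -> R *)
Definition sdq_step (sel : (A -> R) -> A) (r : S -> A -> S -> R) (gamma alpha : R)
  (QQ : (S -> A -> R) * (S -> A -> R)) (x : S * A * S) :
  (S -> A -> R) * (S -> A -> R) :=
  let: (QA, QB) := QQ in
  let: (sk, ak, sk1) := x in
  (fun s a => if (s == sk) && (a == ak) then
      QA s a + alpha * (r sk ak sk1 + gamma * QA sk1 (sel (QB sk1)) - QA s a)
    else QA s a,
   fun s a => if (s == sk) && (a == ak) then
      QB s a + alpha * (r sk ak sk1 + gamma * QB sk1 (sel (QA sk1)) - QB s a)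
    else QB s a).

Definition sdq_run sel r gamma alpha (Q0 : (S -> A -> R) * (S -> A -> R))
  (t : seq (S * A * S)) := foldl (sdq_step sel r gamma alpha) Q0 t.

Definition sample_prob (d : S -> A -> R) (P : S -> A -> S -> R) (x : S * A * S) : R :=
  d x.1.1 x.1.2 * P x.1.1 x.1.2 x.2.

Definition sdq_expect (d : S -> A -> R) (P : S -> A -> S -> R) sel r gamma alpha Q0
  (k : nat) (f : (S -> A -> R) * (S -> A -> R) -> R) : R :=
  \sum_(t : k.-tuple (S * A * S))
     (\prod_(x <- t) sample_prob d P x) * f (sdq_run sel r gamma alpha Q0 t).

(* d_min (d sums to 1, so 1 is a neutral starting value) *)
Definition dmin (d : S -> A -> R) : R := \big[Num.min/1]_(sa : S * A) d sa.1 sa.2.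

End SDQ.

(* Write Q^A_k - Q* = Y_k + N_k and Q^A_k - Q^B_k = Z_k + M_k, where N_k and M_k accumulate the
   centred sampling noise of the two updates through the entrywise filter
   x' = (1 - alpha d(s,a)) x + alpha noise.  Since the double-estimator target differs from the
   Bellman target by at most twice the gap between the two tables, the remainders satisfy the
   deterministic switching-system inequalities
     |Z_{k+1}| <= rho |Z_k| + alpha gamma |M_k|,
     |Y_{k+1}| <= rho |Y_k| + alpha gamma (|N_k| + 2 |Z_k| + 2 |M_k|)
   in sup norm.  The noise is centred and bounded by 8/(1-gamma), so every entry of N_k and M_k
   has second moment at most 64 alpha / ((1-gamma)^2 d_min), which gives
   E |N_k|, E |M_k| <= 8 sqrt(alpha) |S x A| / ((1-gamma) d_min).  Unrolling the recursions leaves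
   a stationary part of order sqrt(alpha), and a transient part rho^k (1 + 1/(1-gamma)) plus
   4 alpha gamma k rho^(k-1), which is absorbed into rho^(k/2) because t e^(-t) <= 1. *)

From HB Require Import structures.
From mathcomp Require Import all_boot all_order all_algebra.
From mathcomp Require Import all_classical all_reals all_analysis.
From mathcomp Require Import ring lra.
Import Order.TTheory GRing.Theory Num.Theory.
Local Open Scope ring_scope.

Section IidExpectation.
Context {R : realType} {X : finType} (w : X -> R).

Definition iid_expect (k : nat) (F : seq X -> R) : R :=
  \sum_(t : k.-tuple X) (\prod_(x <- t) w x) * F t.

Lemma sum_tupleS k (G : k.+1.-tuple X -> R) :
  \sum_(t : k.+1.-tuple X) G t = \sum_x \sum_(t : k.-tuple X) G [tuple of x :: t].
Proof.
rewrite pair_big /= (reindex (fun p : X * k.-tuple X => [tuple of p.1 :: p.2])) //=.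
exists (fun t : k.+1.-tuple X => (thead t, [tuple of behead t])).
  by case=> x t _ /=; congr (_, _); apply: val_inj.
by move=> t _; apply: val_inj; case: t => [[|x s] //=].
Qed.

Lemma iid_expect0 F : iid_expect 0 F = F [::].
Proof.
rewrite /iid_expect (big_pred1 [tuple]) /= ?big_nil ?mul1r //.
by move=> t; apply/esym/eqP/val_inj; case: t => [[]].
Qed.

Lemma iid_expect_cons k F :
  iid_expect k.+1 F = \sum_x w x * iid_expect k (fun t => F (x :: t)).
Proof.
rewrite /iid_expect sum_tupleS; apply: eq_bigr => x _.
by rewrite mulr_sumr; apply: eq_bigr => t _; rewrite big_cons mulrA.
Qed.

Lemma iid_expect_rcons k F :
  iid_expect k.+1 F = iid_expect k (fun t => \sum_x w x * F (rcons t x)).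
Proof.
elim: k F => [|k IH] F.
  by rewrite iid_expect_cons iid_expect0; apply: eq_bigr => x _; rewrite iid_expect0.
by rewrite iid_expect_cons [RHS]iid_expect_cons; apply: eq_bigr => y _; rewrite IH.
Qed.

Lemma iid_expectD k F G :
  iid_expect k (fun t => F t + G t) = iid_expect k F + iid_expect k G.
Proof. by rewrite /iid_expect -big_split; apply: eq_bigr => t _; rewrite mulrDr. Qed.

Lemma iid_expectZ k c F : iid_expect k (fun t => c * F t) = c * iid_expect k F.
Proof. by rewrite /iid_expect mulr_sumr; apply: eq_bigr => t _; rewrite mulrCA. Qed.

Lemma iid_expect_sum (I : finType) k (F : I -> seq X -> R) :
  iid_expect k (fun t => \sum_i F i t) = \sum_i iid_expect k (F i).
Proof. by rewrite /iid_expect exchange_big; apply: eq_bigr => t _; rewrite mulr_sumr. Qed.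

Hypothesis w_ge0 : forall x, 0 <= w x.
Hypothesis w_sum1 : \sum_x w x = 1.

Lemma ler_iid_expect k F G : (forall t, F t <= G t) -> iid_expect k F <= iid_expect k G.
Proof.
move=> FG; apply: ler_sum => t _; apply: ler_wpM2l (FG t).
exact: prodr_ge0.
Qed.

Lemma iid_expect_cst k c : iid_expect k (fun _ => c) = c.
Proof.
elim: k => [|k IH]; first by rewrite iid_expect0.
by rewrite iid_expect_cons; under eq_bigr do rewrite IH; rewrite -mulr_suml w_sum1 mul1r.
Qed.

End IidExpectation.

Lemma linear_recursion_bound (R : realType) (u : nat -> R) (rho a b c : R) :
  0 <= rho < 1 -> 0 <= b -> 0 <= c -> u 0%N <= a ->
  (forall k, u k.+1 <= rho * u k + c + b * rho ^+ k) ->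
  forall k, u k <= rho ^+ k * a + c / (1 - rho) + b * (k%:R * rho ^+ k.-1).
Proof.
move=> /andP[rho0 rho1] b0 c0 u0 uS.
have c_rho : 0 <= c / (1 - rho) by apply: divr_ge0; lra.
elim=> [|k IH]; first by rewrite expr0 mul1r mul0r mulr0 addr0; lra.
apply: le_trans (uS k) _.
have shift : rho * (k%:R * rho ^+ k.-1) = k%:R * rho ^+ k.
  by case: k {IH} => [|k]; rewrite ?mul0r ?mulr0 // exprS mulrCA.
have step := ler_wpM2l rho0 IH.
rewrite !mulrDr [rho * (b * _)]mulrCA shift mulrA -exprS in step.
have -> : c / (1 - rho) = rho * (c / (1 - rho)) + c by field; lra.
rewrite -natr1 mulrDl mul1r; lra.
Qed.

Lemma norm_lerp_le (R : realDomainType) (x y u c : R) :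
  0 <= u <= 1 -> `|x| <= c -> `|y| <= c -> `|x + u * (y - x)| <= c.
Proof.
move=> /andP[u0 u1] xc yc.
rewrite (_ : x + u * (y - x) = (1 - u) * x + u * y); last by ring.
apply: le_trans (ler_normD _ _) _.
rewrite !normrM (ger0_norm u0) ger0_norm ?subr_ge0 //.
have : 0 <= (1 - u) * (c - `|x|) by apply: mulr_ge0; lra.
have : 0 <= u * (c - `|y|) by apply: mulr_ge0; lra.
nra.
Qed.

Section Tables.
Context {R : realType} {S A : finType}.
Implicit Types (Q F : S -> A -> R).

Lemma occupancy_sum1 {p : S -> R} {beta d : S -> A -> R} :
  is_distr p -> is_policy beta -> (forall s a, d s a = p s * beta s a) ->
  \sum_(sa : S * A) d sa.1 sa.2 = 1.
Proof.
move=> [_ p1] beta1 d_pbeta.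
rewrite (_ : \sum_(sa : S * A) _ = \sum_s \sum_a d s a); last first.
  by rewrite pair_big; apply: eq_bigr => -[].
rewrite -p1; apply: eq_bigr => s _.
have [_ b1] := beta1 s; rewrite -[RHS]mulr1 -b1 mulr_sumr.
by apply: eq_bigr => a _; rewrite d_pbeta.
Qed.

Lemma supnorm_ge0 F : 0 <= supnorm F.
Proof. by rewrite /supnorm; elim/big_ind: _ => // x y x0 y0; rewrite le_max x0. Qed.

Lemma ler_supnorm F s a : `|F s a| <= supnorm F.
Proof. by rewrite /supnorm (bigD1 (s, a)) //= le_max lexx. Qed.

Lemma supnorm_le F c : 0 <= c -> (forall s a, `|F s a| <= c) -> supnorm F <= c.
Proof. by move=> c0 Fc; apply: bigmax_le => // -[s a] _; apply: Fc. Qed.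

Lemma supnormD_le F G : supnorm (fun s a => F s a + G s a) <= supnorm F + supnorm G.
Proof.
apply: supnorm_le => [|s a]; first by rewrite addr_ge0 ?supnorm_ge0.
by apply: le_trans (ler_normD _ _) _; rewrite lerD ?ler_supnorm.
Qed.

(* AM-GM entrywise: [|x| <= x^2 / (2c) + c/2]. *)
Lemma supnorm_le_sumsq F c : 0 < c ->
  supnorm F <= (2 * c)^-1 * \sum_(sa : S * A) F sa.1 sa.2 ^+ 2 + c / 2.
Proof.
move=> c0.
have inv2c : 0 <= (2 * c)^-1 by rewrite invr_ge0; lra.
apply: supnorm_le => [|s a].
  by rewrite addr_ge0 ?divr_ge0 ?mulr_ge0 ?sumr_ge0 // => *; rewrite ?sqr_ge0 //; lra.
have Fsa : F s a ^+ 2 <= \sum_(sa : S * A) F sa.1 sa.2 ^+ 2.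
  by rewrite (bigD1 (s, a)) //= lerDl sumr_ge0 // => *; apply: sqr_ge0.
apply: le_trans (_ : (2 * c)^-1 * F s a ^+ 2 + c / 2 <= _); last first.
  by rewrite lerD2r ler_wpM2l.
rewrite -(real_normK (num_real (F s a))) -subr_ge0.
have -> : (2 * c)^-1 * `|F s a| ^+ 2 + c / 2 - `|F s a| = (`|F s a| - c) ^+ 2 / (2 * c).
  by field; lra.
by rewrite divr_ge0 ?sqr_ge0 //; lra.
Qed.

End Tables.

Section Argmax.
Context {R : realType} {A : finType} {sel : (A -> R) -> A}.
Hypothesis sel_max : forall (F : A -> R) a, F a <= F (sel F).

Lemma bigmax_sel (F : A -> R) a0 : \big[Num.max/F a0]_a F a = F (sel F).
Proof.
apply/eqP; rewrite eq_le; apply/andP; split; first exact: bigmax_le.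
by rewrite (bigD1 (sel F)) //= le_max lexx.
Qed.

Lemma sel_cross_le (F G : A -> R) (D : R) : (forall a, `|F a - G a| <= D) ->
  `|F (sel G) - G (sel F)| <= D.
Proof.
move=> FG; have := FG (sel F); have := FG (sel G).
have := sel_max F (sel G); have := sel_max G (sel F).
rewrite !ler_norml => ? ? /andP[? ?] /andP[? ?]; apply/andP; split; lra.
Qed.

Lemma sel_double_le (F G H : A -> R) (D E : R) : (forall a, `|F a - G a| <= D) ->
  (forall a, `|F a - H a| <= E) -> `|F (sel G) - H (sel H)| <= E + 2 * D.
Proof.
move=> FG FH; have := FG (sel F); have := FG (sel G); have := FH (sel F); have := FH (sel H).
have := sel_max F (sel G); have := sel_max G (sel F); have := sel_max H (sel F).
have := sel_max F (sel H).
rewrite !ler_norml => ? ? ? ? /andP[? ?] /andP[? ?] /andP[? ?] /andP[? ?].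
apply/andP; split; lra.
Qed.

End Argmax.

Lemma bellman_optimal_sel {R : realType} {S A : finType} {P r : S -> A -> S -> R} {gamma : R}
  {Qs : S -> A -> R} {sel : (A -> R) -> A} :
  (forall (F : A -> R) a, F a <= F (sel F)) -> bellman_optimal P r gamma Qs ->
  forall s a, Qs s a = \sum_s' P s a s' * (r s a s' + gamma * Qs s' (sel (Qs s'))).
Proof.
by move=> sel_max Qs_opt s a; rewrite Qs_opt; under eq_bigr do rewrite (bigmax_sel sel_max).
Qed.

Section Estimates.
Context {R : realType}.
Implicit Types (g al dm n x rho : R) (k : nat).

Lemma powR_le_exprn x (e : R) k : 0 < x <= 1 -> k%:R <= e -> powR x e <= x ^+ k.
Proof. by move=> x01 ke; rewrite -powR_mulrn ?ger_powR //; case/andP: x01 => /ltW. Qed.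

Lemma stationary_terms_le {g al dm n} :
  0 < g < 1 -> 0 < al < 1 -> 0 < dm <= 1 -> 1 <= n ->
  let q := al * dm * (1 - g) in
  let nu := 8 * (1 - g)^-1 * Num.sqrt al * n / dm in
  (al * g * (3 * nu + 2 * (al * g * nu / q)) / q + nu <=
   120 * powR al (1/2) * n / (powR dm (9/2) * powR (1 - g) (11/2)) : Prop).
Proof.
move=> /andP[g0 g1] /andP[al0 al1] /andP[dm0 dm1] n1 q nu.
have g0' : 0 < 1 - g by lra.
have sqrt_al : 0 < Num.sqrt al by rewrite sqrtr_gt0.
have dmg1 : dm * (1 - g) <= 1 by apply: mulr_ile1; lra.
set iq := (dm * (1 - g))^-1.
have iq1 : 1 <= iq by rewrite /iq invf_ge1 // mulr_gt0.
have nu0 : 0 <= nu by rewrite /nu !(mulr_ge0, divr_ge0, invr_ge0) //; lra.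
have -> : al * g * (3 * nu + 2 * (al * g * nu / q)) / q + nu =
    nu * (1 + 3 * g * iq + 2 * g ^+ 2 * iq ^+ 2).
  by rewrite /q /iq; field; rewrite !lt0r_neq0.
have poly_iq : 1 + 3 * g * iq + 2 * g ^+ 2 * iq ^+ 2 <= 6 * iq ^+ 2.
  have g_iq : g * iq <= iq ^+ 2 by nra.
  have g2 : g ^+ 2 <= 1 by nra.
  have g2_iq : g ^+ 2 * iq ^+ 2 <= iq ^+ 2 by have := sqr_ge0 iq; nra.
  have iq2 : 1 <= iq ^+ 2 by nra.
  lra.
apply: le_trans (ler_wpM2l nu0 poly_iq) _.
have -> : nu * (6 * iq ^+ 2) = 48 * Num.sqrt al * n / (dm ^+ 3 * (1 - g) ^+ 3).
  by rewrite /nu /iq; field; rewrite !lt0r_neq0.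
rewrite div1r powR12_sqrt; last exact: ltW.
have pow_pos : 0 < powR dm (9/2) * powR (1 - g) (11/2) by rewrite mulr_gt0 ?powR_gt0.
have pow_le : powR dm (9/2) * powR (1 - g) (11/2) <= dm ^+ 3 * (1 - g) ^+ 3.
  by rewrite ler_pM ?powR_ge0 ?powR_le_exprn ?dm0 ?g0' //=; lra.
have dg3 : 0 < dm ^+ 3 * (1 - g) ^+ 3 by rewrite mulr_gt0 ?exprn_gt0.
apply: (@le_trans _ _ (120 * Num.sqrt al * n / (dm ^+ 3 * (1 - g) ^+ 3))).
  by rewrite ler_pM2r ?invr_gt0 // ler_pM2r ?(lt_le_trans _ n1) // ler_pM2r //; lra.
by rewrite ler_pM2l ?mulr_gt0 ?(lt_le_trans _ n1) // lef_pV2 ?posrE.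
Qed.

Lemma neg_ln_bounds {rho} : 0 < rho < 1 ->
  [/\ 1 - rho <= - ln rho, rho * - ln rho <= 1 - rho & rho * (- ln rho) ^+ 2 <= 2].
Proof.
move=> /andP[rho0 rho1]; set L := - ln rho.
have expL : expR L = rho^-1 by rewrite expRN lnK.
have L0 : 0 <= L by rewrite oppr_ge0 ltW // ln_lt0 ?rho0.
have rho_inv : rho * rho^-1 = 1 by rewrite divff ?lt0r_neq0.
split.
- by have := expR_ge1Dx (ln rho); rewrite lnK ?posrE //; rewrite /L; lra.
- have := ler_wpM2l (ltW rho0) (expR_ge1Dx L); rewrite expL rho_inv; lra.
- have := ler_wpM2l (ltW rho0) (expR_ge1Dxn 1 L0); rewrite expL rho_inv /=.
  have -> : rho * (1 + L ^+ 2 / 2) = rho + rho * L ^+ 2 / 2 by field.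
  lra.
Qed.

Lemma powR_half_sqr rho k : 0 < rho -> powR rho (k%:R / 2) ^+ 2 = rho ^+ k.
Proof. by move=> rho0; rewrite -powR_mulrn ?powR_ge0 // -powRrM -powR_mulrn ?ltW // mulfVK. Qed.

(* This is [t e^(-t) <= 1] for [t = k (- ln rho) / 2]. *)
Lemma natr_powR_half_ln_le k rho : 0 < rho < 1 ->
  k%:R * powR rho (k%:R / 2) * - ln rho <= 2.
Proof.
move=> /andP[rho0 rho1]; set t := k%:R / 2 * - ln rho.
have t0 : 0 <= t by rewrite mulr_ge0 ?divr_ge0 // oppr_ge0 ltW // ln_lt0 ?rho0.
have -> : k%:R * powR rho (k%:R / 2) * - ln rho = 2 * (t * expR (- t)).
  by rewrite /powR gt_eqF //= /t !mulrN opprK; field.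
have : t * expR (- t) <= expR t * expR (- t).
  by apply: ler_wpM2r; [exact: expR_ge0 | have := expR_ge1Dx t; lra].
rewrite expRxMexpNx_1; lra.
Qed.

Lemma expRN4_ge : 256^-1 <= expR (-4 : R).
Proof.
have -> : expR (-4 : R) = expR (- 2^-1) ^+ 8 by rewrite -expRM_natr; congr expR; field.
have half : 2^-1 <= expR (- 2^-1 : R) by have := expR_ge1Dx (- 2^-1 : R); lra.
apply: le_trans (_ : (2^-1) ^+ 8 <= _); first by rewrite exprVn; lra.
by rewrite lerXn2r // nnegrE ?expR_ge0 //; lra.
Qed.

Lemma rate_bounds {g al dm} : 0 < g < 1 -> 0 < al < 1 -> 0 < dm <= 1 ->
  [/\ 0 < al * dm * (1 - g), al * dm * (1 - g) <= dm & al * dm * (1 - g) < 1].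
Proof.
move=> /andP[g0 g1] /andP[al0 al1] /andP[dm0 dm1].
have al_g : al * (1 - g) <= 1 by rewrite mulr_ile1 //; lra.
have dm_g : dm * (1 - g) <= 1 by rewrite mulr_ile1 //; lra.
split; first by rewrite !mulr_gt0 ?subr_gt0.
  by rewrite mulrAC ler_piMl ?(ltW dm0).
by rewrite -mulrA (le_lt_trans _ al1) // ler_piMr ?(ltW al0).
Qed.

Lemma transient_lhs_le {g al dm} k : 0 < g < 1 -> 0 < al < 1 -> 0 < dm <= 1 ->
  let rho := 1 - al * dm * (1 - g) in
  (rho ^+ k * (1 + (1 - g)^-1) + 4 * al * g * (k%:R * rho ^+ k.-1) <=
   powR rho (k%:R / 2) * (10 / ((1 - g) * dm * rho)) : Prop).
Proof.
move=> g01 al01 dm01 rho.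
have [q0 q_dm q1] := rate_bounds g01 al01 dm01.
case/andP: g01 => g0 g1; case/andP: al01 => al0 al1; case/andP: dm01 => dm0 dm1.
set q := al * dm * (1 - g) in q0 q_dm q1.
have rho01 : 0 < rho < 1 by rewrite /rho -/q; apply/andP; split; lra.
have [q_L _ _] := neg_ln_bounds rho01.
have khL := natr_powR_half_ln_le k rho rho01.
case/andP: rho01 => rho0 rho1.
set h := powR rho (k%:R / 2) in khL *.
have h0 : 0 <= h by exact: powR_ge0.
have hh : h ^+ 2 = rho ^+ k by exact: powR_half_sqr.
have h1 : h <= 1.
  have : h ^+ 2 <= 1 by rewrite hh exprn_ile1 ?ltW.
  nra.
set D := (1 - g) * dm * rho.
have D0 : 0 < D by rewrite !mulr_gt0 // subr_gt0.
have D_g : D <= 1 - g.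
  rewrite /D -mulrA ler_piMr ?subr_ge0 ?(ltW g1) //.
  by rewrite mulr_ile1 ?(ltW dm0) ?(ltW rho0) ?(ltW rho1).
have X1 : 1 <= D^-1 by rewrite invf_ge1 //; lra.
have B_X : (1 - g)^-1 <= D^-1 by rewrite lef_pV2 ?posrE ?subr_gt0.
have V0 : 0 <= al * (k%:R * rho ^+ k.-1).
  by rewrite !mulr_ge0 ?exprn_ge0 ?(ltW al0) ?(ltW rho0).
have V_le : al * (k%:R * rho ^+ k.-1) <= 2 * h * D^-1.
  have -> : al * (k%:R * rho ^+ k.-1) = q * (rho * (k%:R * rho ^+ k.-1)) * D^-1.
    by rewrite /q /D; field; rewrite !lt0r_neq0 ?subr_gt0.
  have -> : rho * (k%:R * rho ^+ k.-1) = k%:R * h ^+ 2.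
    by rewrite hh; case: (k) => [|j]; rewrite ?mul0r ?mulr0 // exprS mulrCA.
  rewrite ler_pM2r ?invr_gt0 //.
  have kh0 : 0 <= k%:R * h ^+ 2 by rewrite mulr_ge0 ?sqr_ge0.
  have := ler_wpM2r kh0 q_L; rewrite (_ : 1 - rho = q); last by rewrite /rho /q; ring.
  have := ler_wpM2r h0 khL; lra.
have rhoB : rho ^+ k * (1 + (1 - g)^-1) <= 2 * h * D^-1.
  rewrite -hh; have : 0 <= h - h ^+ 2 by nra.
  have : 0 <= h * (D^-1 - (1 - g)^-1) by rewrite mulr_ge0 // subr_ge0.
  have : 0 <= h * (D^-1 - 1) by rewrite mulr_ge0 // subr_ge0.
  have : 0 <= (1 + (1 - g)^-1) by rewrite addr_ge0 // invr_ge0; lra.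
  nra.
have : 4 * al * g * (k%:R * rho ^+ k.-1) <= 4 * (al * (k%:R * rho ^+ k.-1)).
  have : 0 <= 1 - g by lra.
  move/(mulr_ge0 V0); nra.
rewrite mulrA mulrC; lra.
Qed.

Lemma transient_rhs_ge {g n rho} k : 0 < g < 1 -> 0 < rho < 1 -> 1 <= n ->
  powR rho (k%:R / 2) * (768 / ((1 - g) * rho ^+ 4 * (ln rho) ^+ 4)) <=
  48 * powR n (3/2) / (1 - g) * (powR rho (-4) * (-8) ^+ 4 / (ln rho) ^+ 4)
    * powR rho (-4 / ln rho) * powR rho (k%:R / 2).
Proof.
move=> /andP[g0 g1] rho01 n1.
have ln0 : ln rho != 0 by rewrite ltr0_neq0 // ln_lt0.
case/andP: rho01 => rho0 rho1.
have -> : powR rho (-4) = (rho ^+ 4)^-1 by rewrite powR_invn ?ltW.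
have -> : powR rho (-4 / ln rho) = expR (-4) by rewrite /powR gt_eqF //= divfK.
have ln4 : 0 < (ln rho) ^+ 4 by rewrite exprn_even_gt0 // ln0 orbT.
have D0 : 0 < (1 - g) * rho ^+ 4 * (ln rho) ^+ 4.
  by rewrite mulr_gt0 // mulr_gt0 ?subr_gt0 ?exprn_gt0.
have n32 : 1 <= powR n (3/2).
  by rewrite -[leLHS](powRr0 n) ler_powR ?divr_ge0 //; lra.
have C768 : 768 <= 48 * 4096 * (powR n (3/2) * expR (-4)).
  have := expRN4_ge; have := expR_ge0 (-4 : R); nra.
rewrite [X in _ <= X](_ : _ = powR rho (k%:R / 2) *
    (48 * 4096 * (powR n (3/2) * expR (-4)) / ((1 - g) * rho ^+ 4 * (ln rho) ^+ 4))).
  by rewrite ler_wpM2l ?powR_ge0 // ler_pM2r ?invr_gt0.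
by field; rewrite ln0 !lt0r_neq0 ?subr_gt0.
Qed.

Lemma transient_terms_le {g al dm n} k :
  0 < g < 1 -> 0 < al < 1 -> 0 < dm <= 1 -> 1 <= n ->
  let rho := 1 - al * dm * (1 - g) in
  (rho ^+ k * (1 + (1 - g)^-1) + 4 * al * g * (k%:R * rho ^+ k.-1) <=
   48 * powR n (3/2) / (1 - g) * (powR rho (-4) * (-8) ^+ 4 / (ln rho) ^+ 4)
     * powR rho (-4 / ln rho) * powR rho (k%:R / 2) : Prop).
Proof.
move=> g01 al01 dm01 n1 rho.
apply: le_trans (transient_lhs_le k g01 al01 dm01) _.
have [q0 q_dm q1] := rate_bounds g01 al01 dm01.
case/andP: g01 => g0 g1; case/andP: dm01 => dm0 dm1.
have rho01 : 0 < rho < 1 by rewrite /rho; apply/andP; split; lra.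
have [_ rhoL rhoL2] := neg_ln_bounds rho01.
apply: le_trans (transient_rhs_ge k _ rho01 n1) => //; last by apply/andP.
have lnrho := ln_lt0 rho01.
case/andP: rho01 => rho0 rho1.
have ln4 : 0 < (ln rho) ^+ 4 by rewrite exprn_even_gt0 // ltr0_neq0 ?orbT.
rewrite ler_wpM2l ?powR_ge0 // -/rho.
rewrite ler_pdivrMr ?mulr_gt0 ?subr_gt0 // mulrAC ler_pdivlMr; last first.
  by rewrite mulr_gt0 // mulr_gt0 ?subr_gt0 ?exprn_gt0.
set L := - ln rho in rhoL rhoL2.
have -> : (ln rho) ^+ 4 = L ^+ 4 by rewrite /L; ring.
have rL0 : 0 <= rho * L by rewrite mulr_ge0 ?(ltW rho0) // /L oppr_ge0 ltW.
have rL2 : (rho * L) ^+ 2 <= dm.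
  have e : 1 - rho = al * dm * (1 - g) by rewrite /rho; ring.
  have : rho * L <= dm by lra.
  nra.
have : rho ^+ 3 * L ^+ 4 <= 2 * dm.
  have -> : rho ^+ 3 * L ^+ 4 = (rho * L) ^+ 2 * (rho * L ^+ 2) by ring.
  by rewrite mulrC ler_pM ?sqr_ge0 // mulr_ge0 ?sqr_ge0 ?(ltW rho0).
have g1' : 0 <= 1 - g by lra.
have := mulr_ge0 g1' (ltW rho0).
have := mulr_ge0 g1' (mulr_ge0 (ltW rho0) (ltW dm0)).
nra.
Qed.

End Estimates.

Section DoubleQ.
Context {R : realType} {S A : finType} {P r : S -> A -> S -> R} {gamma alpha : R}.
Context {d Qstar : S -> A -> R} {sel : (A -> R) -> A}.
Hypothesis P_kernel : is_kernel P.
Hypothesis r_le1 : forall s a s', `|r s a s'| <= 1.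
Hypotheses (gamma0 : 0 < gamma) (gamma1 : gamma < 1).
Hypotheses (alpha0 : 0 < alpha) (alpha1 : alpha < 1).
Hypothesis d_gt0 : forall s a, 0 < d s a.
Hypothesis d_sum1 : \sum_(sa : S * A) d sa.1 sa.2 = 1.
Hypothesis sel_max : forall (F : A -> R) a, F a <= F (sel F).
Hypothesis Qstar_fix : forall s a,
  Qstar s a = \sum_s' P s a s' * (r s a s' + gamma * Qstar s' (sel (Qstar s'))).

Local Notation table := (S -> A -> R).
Local Notation sample := (S * A * S)%type.
Local Notation w := (sample_prob d P).
Local Notation step := (sdq_step sel r gamma alpha).
Implicit Types (Q QA QB : table) (QQ : table * table) (x : sample).

Lemma d_le1 s a : d s a <= 1.
Proof. by rewrite -d_sum1 (bigD1 (s, a)) //= lerDl sumr_ge0 // => i _; apply: ltW. Qed.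

Lemma kernel_mean_norm_le s a (h : S -> R) c :
  (forall s', `|h s'| <= c) -> `|\sum_s' P s a s' * h s'| <= c.
Proof.
move=> hc; have [P0 P1] := P_kernel s a.
apply: le_trans (ler_norm_sum _ _ _) _.
apply: le_trans (_ : \sum_s' P s a s' * c <= _); last by rewrite -mulr_suml P1 mul1r.
by apply: ler_sum => s' _; rewrite normrM ger0_norm // ler_wpM2l.
Qed.

Lemma kernel_meanB s a (h : S -> R) c :
  \sum_s' P s a s' * (h s' - c) = \sum_s' P s a s' * h s' - c.
Proof.
have [_ P1] := P_kernel s a.
by under eq_bigr do rewrite mulrBr; rewrite sumrB -mulr_suml P1 mul1r.
Qed.

Lemma sdq_step_swap QQ x : step (QQ.2, QQ.1) x = ((step QQ x).2, (step QQ x).1).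
Proof. by case: QQ => QA QB; case: x => [[s0 a0] s1]. Qed.

Lemma sdq_run_swap QA QB t :
  sdq_run sel r gamma alpha (QB, QA) t =
  ((sdq_run sel r gamma alpha (QA, QB) t).2, (sdq_run sel r gamma alpha (QA, QB) t).1).
Proof.
rewrite /sdq_run.
suff gen QQ : foldl step (QQ.2, QQ.1) t = ((foldl step QQ t).2, (foldl step QQ t).1).
  exact: (gen (QA, QB)).
elim: t QQ => [|x t IH] QQ //.
by rewrite -[LHS]/(foldl step (step (QQ.2, QQ.1) x) t) sdq_step_swap IH.
Qed.

(** * Sampling noise *)

Definition visits s a x := (s == x.1.1) && (a == x.1.2).

Definition target_mean QA QB s a :=
  \sum_s' P s a s' * (r s a s' + gamma * QA s' (sel (QB s'))).

Definition noiseA QQ x s a :=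
  (if visits s a x then r x.1.1 x.1.2 x.2 + gamma * QQ.1 x.2 (sel (QQ.2 x.2)) - QQ.1 s a
   else 0) - d s a * (target_mean QQ.1 QQ.2 s a - QQ.1 s a).

Definition cross_gap QQ s' := gamma * (QQ.1 s' (sel (QQ.2 s')) - QQ.2 s' (sel (QQ.1 s'))).

Definition cross_gap_mean QQ s a := \sum_s' P s a s' * cross_gap QQ s'.

Definition noise_gap QQ x s a :=
  (if visits s a x then cross_gap QQ x.2 - (QQ.1 s a - QQ.2 s a) else 0)
  - d s a * (cross_gap_mean QQ s a - (QQ.1 s a - QQ.2 s a)).

Lemma sdq_step1E QQ x s a :
  (step QQ x).1 s a =
  QQ.1 s a + alpha * (noiseA QQ x s a + d s a * (target_mean QQ.1 QQ.2 s a - QQ.1 s a)).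
Proof.
case: QQ => QA QB; case: x => [[s0 a0] s1].
by rewrite /noiseA /visits /=; case: ifP => _; ring.
Qed.

Lemma sdq_step_gapE QQ x s a :
  (step QQ x).1 s a - (step QQ x).2 s a = (QQ.1 s a - QQ.2 s a)
    + alpha * (noise_gap QQ x s a + d s a * (cross_gap_mean QQ s a - (QQ.1 s a - QQ.2 s a))).
Proof.
case: QQ => QA QB; case: x => [[s0 a0] s1].
by rewrite /noise_gap /cross_gap /visits /=; case: ifP => _; ring.
Qed.

Lemma sum_sample (F : sample -> R) :
  \sum_x F x = \sum_(sa : S * A) \sum_s' F (sa, s').
Proof. by rewrite pair_big; apply: eq_bigr => -[]. Qed.

Lemma sample_prob_ge0 x : 0 <= w x.
Proof. by rewrite /sample_prob mulr_ge0 ?(ltW (d_gt0 _ _)) //; case: (P_kernel x.1.1 x.1.2). Qed.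

Lemma sample_prob_sum1 : \sum_x w x = 1.
Proof.
rewrite sum_sample -d_sum1; apply: eq_bigr => -[s a] _.
by have [_ P1] := P_kernel s a; rewrite /sample_prob /= -mulr_sumr P1 mulr1.
Qed.

Lemma sample_mean_cst c : \sum_x w x * c = c.
Proof. by rewrite -mulr_suml sample_prob_sum1 mul1r. Qed.

Lemma sample_mean_le (F : sample -> R) c : (forall x, F x <= c) -> \sum_x w x * F x <= c.
Proof.
move=> Fc; rewrite -[leRHS]sample_mean_cst.
by apply: ler_sum => x _; rewrite ler_wpM2l ?sample_prob_ge0.
Qed.

Lemma sample_mean_visits s a (H : sample -> R) :
  \sum_x w x * (if visits s a x then H x else 0) = d s a * \sum_s' P s a s' * H (s, a, s').
Proof.
rewrite sum_sample (bigD1 (s, a)) //= [X in _ + X]big1 ?addr0.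
  by rewrite mulr_sumr; apply: eq_bigr => s' _; rewrite /visits /= !eqxx mulrA.
move=> [s0 a0] neq; apply: big1 => s' _; rewrite /visits /=.
case: ifP => [/andP[/eqP e1 /eqP e2]|]; last by rewrite mulr0.
by rewrite e1 e2 eqxx in neq.
Qed.

Lemma noiseA_mean QQ s a : \sum_x w x * noiseA QQ x s a = 0.
Proof.
rewrite /noiseA; under eq_bigr do rewrite mulrBr.
by rewrite sumrB sample_mean_cst sample_mean_visits kernel_meanB subrr.
Qed.

Lemma noise_gap_mean QQ s a : \sum_x w x * noise_gap QQ x s a = 0.
Proof.
rewrite /noise_gap; under eq_bigr do rewrite mulrBr.
by rewrite sumrB sample_mean_cst sample_mean_visits kernel_meanB subrr.
Qed.

Lemma sample_mean_sqr (u c : R) (e : sample -> R) : \sum_x w x * e x = 0 ->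
  \sum_x w x * (u + c * e x) ^+ 2 = u ^+ 2 + c ^+ 2 * \sum_x w x * e x ^+ 2.
Proof.
move=> e0.
rewrite (eq_bigr (fun x => u ^+ 2 * w x + 2 * u * c * (w x * e x) + c ^+ 2 * (w x * e x ^+ 2)));
  last by move=> x _; ring.
by rewrite !big_split /= -!mulr_sumr sample_prob_sum1 e0; ring.
Qed.

(** * Boundedness of the iterates *)

Definition qmax : R := (1 - gamma)^-1.

Definition bounded Q := forall s a, `|Q s a| <= qmax.

Lemma qmax_ge1 : 1 <= qmax.
Proof. by rewrite /qmax invf_ge1 ?subr_gt0 // gerBl ltW. Qed.

Lemma qmax_fix : 1 + gamma * qmax = qmax.
Proof. by rewrite /qmax; field; rewrite subr_eq0 gt_eqF. Qed.

Lemma target_norm_le s a s' b Q : bounded Q -> `|r s a s' + gamma * Q s' b| <= qmax.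
Proof.
move=> QB; apply: le_trans (ler_normD _ _) _; rewrite normrM (gtr0_norm gamma0).
have := r_le1 s a s'; have := ler_wpM2l (ltW gamma0) (QB s' b); have := qmax_fix; lra.
Qed.

Lemma sdq_step_bounded QQ x : bounded QQ.1 -> bounded QQ.2 ->
  bounded (step QQ x).1 /\ bounded (step QQ x).2.
Proof.
case: QQ => QA QB; case: x => [[s0 a0] s1] /= QAb QBb.
have alpha01' : 0 <= alpha <= 1 by rewrite !ltW.
by split=> s a /=; case: ifP => _ //; apply: norm_lerp_le => //; apply: target_norm_le.
Qed.

Lemma sdq_run_bounded QQ t : bounded QQ.1 -> bounded QQ.2 ->
  bounded (sdq_run sel r gamma alpha QQ t).1 /\ bounded (sdq_run sel r gamma alpha QQ t).2.
Proof.
rewrite /sdq_run; elim: t QQ => [|x t IH] QQ //= Q1b Q2b.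
by case: (sdq_step_bounded QQ x Q1b Q2b); apply: IH.
Qed.

Lemma Qstar_bounded : bounded Qstar.
Proof.
suff : supnorm Qstar <= qmax by move=> le s a; apply: le_trans le; apply: ler_supnorm.
have m0 := supnorm_ge0 Qstar.
have : supnorm Qstar <= 1 + gamma * supnorm Qstar.
  apply: supnorm_le => [|s a]; first by rewrite addr_ge0 ?mulr_ge0 ?(ltW gamma0).
  rewrite Qstar_fix; apply: kernel_mean_norm_le => s'.
  apply: le_trans (ler_normD _ _) _; rewrite normrM (gtr0_norm gamma0).
  by rewrite lerD ?ler_wpM2l ?(ltW gamma0) ?ler_supnorm.
rewrite /qmax -div1r => le; rewrite ler_pdivlMr ?subr_gt0 //; lra.
Qed.

Lemma target_mean_bounded QA QB s a : bounded QA -> `|target_mean QA QB s a| <= qmax.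
Proof. by move=> QAb; apply: kernel_mean_norm_le => s'; apply: target_norm_le. Qed.

Lemma cross_gap_norm_le QQ s' : bounded QQ.1 -> bounded QQ.2 -> `|cross_gap QQ s'| <= 2 * qmax.
Proof.
move=> QAb QBb; rewrite /cross_gap normrM (gtr0_norm gamma0).
have gap : `|QQ.1 s' (sel (QQ.2 s')) - QQ.2 s' (sel (QQ.1 s'))| <= 2 * qmax.
  apply: (sel_cross_le sel_max) => b.
  by apply: le_trans (ler_normB _ _) _; have := QAb s' b; have := QBb s' b; lra.
apply: le_trans (ler_wpM2l (ltW gamma0) gap) _.
by rewrite ler_piMl ?(ltW gamma1) // mulr_ge0 // (le_trans ler01 qmax_ge1).
Qed.

Lemma centred_norm_le (v m : R) (c : R) s a :
  `|v| <= c -> `|m| <= c -> `|v - d s a * m| <= 2 * c.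
Proof.
move=> vc mc; apply: le_trans (ler_normB _ _) _; rewrite normrM gtr0_norm //.
have := d_le1 s a; have := d_gt0 s a; have := normr_ge0 m; nra.
Qed.

Lemma noiseA_norm_le QQ x s a :
  bounded QQ.1 -> bounded QQ.2 -> `|noiseA QQ x s a| <= 8 * qmax.
Proof.
move=> QAb _; have := qmax_ge1.
suff : `|noiseA QQ x s a| <= 2 * (2 * qmax) by lra.
apply: centred_norm_le.
  case: ifP => _; last by rewrite normr0; have := qmax_ge1; lra.
  apply: le_trans (ler_normB _ _) _.
  by have := target_norm_le x.1.1 x.1.2 x.2 (sel (QQ.2 x.2)) _ QAb; have := QAb s a; lra.
apply: le_trans (ler_normB _ _) _.
by have := target_mean_bounded QQ.1 QQ.2 s a QAb; have := QAb s a; lra.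
Qed.

Lemma noise_gap_norm_le QQ x s a :
  bounded QQ.1 -> bounded QQ.2 -> `|noise_gap QQ x s a| <= 8 * qmax.
Proof.
move=> QAb QBb; have := qmax_ge1.
have gap : `|QQ.1 s a - QQ.2 s a| <= 2 * qmax.
  by apply: le_trans (ler_normB _ _) _; have := QAb s a; have := QBb s a; lra.
suff : `|noise_gap QQ x s a| <= 2 * (4 * qmax) by lra.
apply: centred_norm_le.
  case: ifP => _; last by rewrite normr0; have := qmax_ge1; lra.
  by apply: le_trans (ler_normB _ _) _; have := cross_gap_norm_le _ x.2 QAb QBb; lra.
apply: le_trans (ler_normB _ _) _.
have : `|cross_gap_mean QQ s a| <= 2 * qmax.
  by apply: kernel_mean_norm_le => s'; apply: cross_gap_norm_le.
lra.
Qed.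

(** * The switching-system decomposition *)

Local Notation dm := (dmin d).
Definition rate : R := 1 - alpha * dm * (1 - gamma).

Lemma dmin_le s a : dm <= d s a.
Proof. by rewrite /dmin (bigD1 (s, a)) //= ge_min lexx. Qed.

Lemma dmin_gt0 : 0 < dm.
Proof.
rewrite /dmin; elim/big_ind: _ => [|x y x0 y0|i _].
- exact: ltr01.
- by rewrite lt_min x0.
- exact: d_gt0.
Qed.

Lemma dmin_le1 : dm <= 1.
Proof.
rewrite /dmin; elim/big_ind: _ => [|x y x1 _|i _].
- by [].
- by rewrite ge_min x1.
- exact: d_le1.
Qed.

Lemma rate_bounds_dmin : [/\ 0 < alpha * dm * (1 - gamma),
  alpha * dm * (1 - gamma) <= dm & alpha * dm * (1 - gamma) < 1].
Proof. by apply: rate_bounds; rewrite ?gamma0 ?alpha0 ?dmin_gt0 ?dmin_le1. Qed.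

Lemma rate_ge0 : 0 <= rate.
Proof. by case: rate_bounds_dmin => _ _; rewrite /rate; lra. Qed.

Lemma rate_lt1 : rate < 1.
Proof. by case: rate_bounds_dmin; rewrite /rate; lra. Qed.

(* An entry moves at speed [alpha d(s,a) >= alpha dmin] towards a target within [gamma] of the
   current bound: this is where the contraction factor [rate] comes from. *)
Lemma mix_norm_le ds (Y Z v u : R) : dm <= ds <= 1 -> 0 <= Y -> 0 <= Z ->
  `|v| <= Y -> `|u| <= gamma * (Y + Z) ->
  `|(1 - alpha * ds) * v + alpha * ds * u| <= rate * Y + alpha * gamma * Z.
Proof.
move=> /andP[dm_ds ds1] Y0 Z0 vY uYZ.
have ds0 : 0 < ds := lt_le_trans dmin_gt0 dm_ds.
have mix0 : 0 <= 1 - alpha * ds.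
  by rewrite subr_ge0 mulr_ile1 ?(ltW alpha0) ?(ltW alpha1) ?(ltW ds0).
apply: le_trans (ler_normD _ _) _.
rewrite !normrM (ger0_norm mix0) (gtr0_norm alpha0) (gtr0_norm ds0).
have := ler_wpM2l mix0 vY; have := ler_wpM2l (mulr_ge0 (ltW alpha0) (ltW ds0)) uYZ.
have : 0 <= alpha * (1 - gamma) * Y * (ds - dm).
  by rewrite !mulr_ge0 ?subr_ge0 ?(ltW alpha0) ?(ltW gamma1).
have : 0 <= alpha * gamma * Z * (1 - ds).
  by rewrite !mulr_ge0 ?subr_ge0 ?(ltW alpha0) ?(ltW gamma0).
rewrite /rate; lra.
Qed.

(* [accA] and [accG] are the noise terms N_k and M_k of the decomposition: not observed by the
   algorithm, but functions of the sample path. *)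
Record aug_state := AugState { est : table * table; accA : table; accG : table }.

Definition aug_step (st : aug_state) x : aug_state :=
  AugState (step (est st) x)
    (fun s a => (1 - alpha * d s a) * accA st s a + alpha * noiseA (est st) x s a)
    (fun s a => (1 - alpha * d s a) * accG st s a + alpha * noise_gap (est st) x s a).

Definition aug_run QQ (t : seq sample) : aug_state :=
  foldl aug_step (AugState QQ (fun _ _ => 0) (fun _ _ => 0)) t.

Lemma aug_run_est QQ t : est (aug_run QQ t) = sdq_run sel r gamma alpha QQ t.
Proof.
suff gen st : est (foldl aug_step st t) = foldl step (est st) t by apply: gen.
by elim: t st => [|x t IH] st //=; rewrite IH.
Qed.

Definition devA st s a := (est st).1 s a - Qstar s a - accA st s a.
Definition devG st s a := ((est st).1 s a - (est st).2 s a) - accG st s a.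

Lemma target_mean_err QA QB (E D : R) s a :
  (forall s a, `|QA s a - Qstar s a| <= E) -> (forall s a, `|QA s a - QB s a| <= D) ->
  `|target_mean QA QB s a - Qstar s a| <= gamma * (E + 2 * D).
Proof.
move=> QAE QBD; rewrite Qstar_fix /target_mean -sumrB.
rewrite (eq_bigr (fun s' =>
  P s a s' * (gamma * (QA s' (sel (QB s')) - Qstar s' (sel (Qstar s')))))); last first.
  by move=> s' _; ring.
apply: kernel_mean_norm_le => s'; rewrite normrM (gtr0_norm gamma0) ler_wpM2l ?(ltW gamma0) //.
exact: (sel_double_le sel_max).
Qed.

Lemma cross_gap_mean_norm_le QQ (D : R) s a :
  (forall s a, `|QQ.1 s a - QQ.2 s a| <= D) -> `|cross_gap_mean QQ s a| <= gamma * D.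
Proof.
move=> QD; apply: kernel_mean_norm_le => s'.
rewrite /cross_gap normrM (gtr0_norm gamma0) ler_wpM2l ?(ltW gamma0) //.
exact: (sel_cross_le sel_max).
Qed.

Lemma devA_step st x s a : devA (aug_step st x) s a =
  (1 - alpha * d s a) * devA st s a
  + alpha * d s a * (target_mean (est st).1 (est st).2 s a - Qstar s a).
Proof. by rewrite /devA /= sdq_step1E; ring. Qed.

Lemma devG_step st x s a : devG (aug_step st x) s a =
  (1 - alpha * d s a) * devG st s a + alpha * d s a * cross_gap_mean (est st) s a.
Proof. by rewrite /devG /= sdq_step_gapE; ring. Qed.

Lemma est_gap_le st s a :
  `|(est st).1 s a - (est st).2 s a| <= supnorm (devG st) + supnorm (accG st).
Proof.
rewrite (_ : _ - _ = devG st s a + accG st s a); last by rewrite /devG; ring.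
by apply: le_trans (ler_normD _ _) _; rewrite lerD ?ler_supnorm.
Qed.

Lemma devG_contract st x : supnorm (devG (aug_step st x)) <=
  rate * supnorm (devG st) + alpha * gamma * supnorm (accG st).
Proof.
have [Z0 M0] := (supnorm_ge0 (devG st), supnorm_ge0 (accG st)).
apply: supnorm_le => [|s a].
  by rewrite addr_ge0 ?mulr_ge0 ?rate_ge0 ?(ltW alpha0) ?(ltW gamma0).
rewrite devG_step; apply: mix_norm_le; rewrite ?dmin_le ?d_le1 ?ler_supnorm //.
exact/cross_gap_mean_norm_le/est_gap_le.
Qed.

Lemma devA_contract st x : supnorm (devA (aug_step st x)) <= rate * supnorm (devA st)
  + alpha * gamma * (supnorm (accA st) + 2 * supnorm (devG st) + 2 * supnorm (accG st)).
Proof.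
have [Y0 N0] := (supnorm_ge0 (devA st), supnorm_ge0 (accA st)).
have [Z0 M0] := (supnorm_ge0 (devG st), supnorm_ge0 (accG st)).
apply: supnorm_le => [|s a].
  by rewrite addr_ge0 ?mulr_ge0 ?rate_ge0 ?(ltW alpha0) ?(ltW gamma0) //; lra.
rewrite devA_step; apply: mix_norm_le; rewrite ?dmin_le ?d_le1 ?ler_supnorm //; first lra.
rewrite (_ : _ + (_ + _ + _) = supnorm (devA st) + supnorm (accA st)
  + 2 * (supnorm (devG st) + supnorm (accG st))); last by ring.
apply: target_mean_err => [s' a'|]; last exact: est_gap_le.
rewrite (_ : _ - _ = devA st s' a' + accA st s' a'); last by rewrite /devA; ring.
by apply: le_trans (ler_normD _ _) _; rewrite lerD ?ler_supnorm.
Qed.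

(** * Expectations along the sample path *)

Variable QQ0 : table * table.
Hypotheses (QA0_le1 : forall s a, `|QQ0.1 s a| <= 1) (QB0_le1 : forall s a, `|QQ0.2 s a| <= 1).

Definition aug_expect k (f : aug_state -> R) := iid_expect w k (fun t => f (aug_run QQ0 t)).

Lemma aug_run_bounded t : bounded (est (aug_run QQ0 t)).1 /\ bounded (est (aug_run QQ0 t)).2.
Proof.
by rewrite aug_run_est; apply: sdq_run_bounded => s a; apply: le_trans qmax_ge1.
Qed.

Lemma aug_expectS_le k f g :
  (forall t, \sum_x w x * f (aug_step (aug_run QQ0 t) x) <= g (aug_run QQ0 t)) ->
  aug_expect k.+1 f <= aug_expect k g.
Proof.
move=> fg; rewrite /aug_expect iid_expect_rcons; apply: (ler_iid_expect _ sample_prob_ge0) => t.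
by under eq_bigr do rewrite /aug_run foldl_rcons; apply: fg.
Qed.

Lemma aug_expect_lin k (c1 c2 : R) f g :
  aug_expect k (fun st => c1 * f st + c2 * g st) = c1 * aug_expect k f + c2 * aug_expect k g.
Proof. by rewrite /aug_expect iid_expectD !iid_expectZ. Qed.

Definition noise_var : R := 64 * alpha * qmax ^+ 2 / dm.

Lemma noise_var_ge0 : 0 <= noise_var.
Proof.
by rewrite /noise_var divr_ge0 ?(ltW dmin_gt0) // mulr_ge0 ?sqr_ge0 // mulr_ge0 ?(ltW alpha0).
Qed.

(* [noise_var] bounds the stationary value of the second-moment recursion of the filter
   [x' = (1 - alpha d(s,a)) x + alpha noise] with [|noise| <= 8 qmax], uniformly in [(s,a)]. *)
Lemma noise_var_fix s a :
  (1 - alpha * d s a) ^+ 2 * noise_var + alpha ^+ 2 * (8 * qmax) ^+ 2 <= noise_var.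
Proof.
have var_dm : alpha ^+ 2 * (8 * qmax) ^+ 2 = alpha * dm * noise_var.
  by rewrite /noise_var; field; rewrite lt0r_neq0 ?dmin_gt0.
have : 0 <= d s a - dm by rewrite subr_ge0 dmin_le.
move/(mulr_ge0 (mulr_ge0 (ltW alpha0) noise_var_ge0)).
have : 0 <= alpha * noise_var * d s a * (1 - alpha * d s a).
  apply: mulr_ge0; last first.
    by rewrite subr_ge0 mulr_ile1 ?(ltW alpha0) ?(ltW alpha1) ?(ltW (d_gt0 _ _)) ?d_le1.
  by rewrite mulr_ge0 ?(ltW (d_gt0 _ _)) // mulr_ge0 ?(ltW alpha0) ?noise_var_ge0.
rewrite var_dm; nra.
Qed.

Lemma acc_sqr_expect_le (acc : aug_state -> table) (noise : table * table -> sample -> table) :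
  (forall st x s a,
     acc (aug_step st x) s a = (1 - alpha * d s a) * acc st s a + alpha * noise (est st) x s a) ->
  (forall s a, acc (AugState QQ0 (fun _ _ => 0) (fun _ _ => 0)) s a = 0) ->
  (forall QQ s a, \sum_x w x * noise QQ x s a = 0) ->
  (forall QQ x s a, bounded QQ.1 -> bounded QQ.2 -> `|noise QQ x s a| <= 8 * qmax) ->
  forall k s a, aug_expect k (fun st => acc st s a ^+ 2) <= noise_var.
Proof.
move=> accS acc0 noise0 noise_le k s a.
elim: k => [|k IH]; first by rewrite /aug_expect iid_expect0 /= acc0 expr0n noise_var_ge0.
set u := 1 - alpha * d s a.
apply: le_trans (aug_expectS_le k _
  (fun st => u ^+ 2 * acc st s a ^+ 2 + alpha ^+ 2 * (8 * qmax) ^+ 2) _) _.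
  move=> t; under eq_bigr do rewrite accS.
  rewrite sample_mean_sqr // exprMn lerD2l ler_wpM2l ?sqr_ge0 //.
  apply: sample_mean_le => x; have [QAb QBb] := aug_run_bounded t.
  rewrite -real_normK ?num_real // lerXn2r ?nnegrE ?noise_le //.
  by rewrite mulr_ge0 // (le_trans ler01 qmax_ge1).
rewrite /aug_expect iid_expectD (iid_expect_cst _ sample_prob_sum1).
rewrite (iid_expectZ _ _ _ (fun t => acc (aug_run QQ0 t) s a ^+ 2)).
apply: le_trans (noise_var_fix s a); rewrite lerD2r.
by apply: ler_wpM2l; [exact: sqr_ge0 | exact: IH].
Qed.

Local Notation nSA := (#|{: S * A}|%:R : R).

Definition noise_level : R := 8 * qmax * Num.sqrt alpha * nSA / dm.

Lemma card_SA_ge1 : 1 <= nSA.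
Proof.
rewrite ler1n; apply/card_gt0P; case: (pickP (@predT (S * A))) => [sa _|none]; first by exists sa.
by move: d_sum1; rewrite big_pred0 // => /esym/eqP; rewrite oner_eq0.
Qed.

Lemma noise_level_gt0 : 0 < noise_level.
Proof.
rewrite /noise_level divr_gt0 ?dmin_gt0 // mulr_gt0 ?(lt_le_trans ltr01 card_SA_ge1) //.
by rewrite mulr_gt0 ?sqrtr_gt0 // mulr_gt0 // (lt_le_trans ltr01 qmax_ge1).
Qed.

Lemma noise_var_card_le : nSA * noise_var <= noise_level ^+ 2.
Proof.
have -> : noise_level ^+ 2 = nSA * noise_var * (nSA / dm).
  rewrite /noise_level /noise_var; set sa := Num.sqrt alpha.
  have <- : sa ^+ 2 = alpha by rewrite sqr_sqrtr ?ltW.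
  by field; rewrite lt0r_neq0 ?dmin_gt0.
apply: ler_peMr; first by rewrite mulr_ge0 ?noise_var_ge0 ?(le_trans ler01 card_SA_ge1).
by rewrite ler_pdivlMr ?dmin_gt0 // mul1r (le_trans dmin_le1 card_SA_ge1).
Qed.

Lemma acc_norm_expect_le (acc : aug_state -> table) k :
  (forall s a, aug_expect k (fun st => acc st s a ^+ 2) <= noise_var) ->
  aug_expect k (fun st => supnorm (acc st)) <= noise_level.
Proof.
move=> acc_sqr; have nu0 := noise_level_gt0; rewrite /aug_expect.
apply: le_trans (ler_iid_expect _ sample_prob_ge0 k _
  (fun t => (2 * noise_level)^-1 * \sum_(sa : S * A) acc (aug_run QQ0 t) sa.1 sa.2 ^+ 2
            + noise_level / 2) _) _.
  by move=> t; apply: supnorm_le_sumsq.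
rewrite iid_expectD (iid_expect_cst _ sample_prob_sum1).
rewrite (iid_expectZ _ _ _ (fun t => \sum_(sa : S * A) acc (aug_run QQ0 t) sa.1 sa.2 ^+ 2)).
rewrite (iid_expect_sum _ _ k (fun sa t => acc (aug_run QQ0 t) sa.1 sa.2 ^+ 2)).
have sum_le : \sum_(sa : S * A) iid_expect w k (fun t => acc (aug_run QQ0 t) sa.1 sa.2 ^+ 2)
    <= noise_level ^+ 2.
  apply: le_trans noise_var_card_le.
  apply: le_trans (_ : \sum_(sa : S * A) noise_var <= _); last by rewrite sumr_const mulr_natl.
  by apply: ler_sum => sa _; apply: acc_sqr.
have inv0 : 0 <= (2 * noise_level)^-1 by rewrite invr_ge0 mulr_ge0 ?ltW.
rewrite [leRHS](_ : _ = (2 * noise_level)^-1 * noise_level ^+ 2 + noise_level / 2).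
  by rewrite lerD2r ler_wpM2l.
by field; rewrite lt0r_neq0.
Qed.

Lemma accA_expect_le k : aug_expect k (fun st => supnorm (accA st)) <= noise_level.
Proof.
apply: acc_norm_expect_le => s a; apply: (acc_sqr_expect_le _ noiseA) => //.
  exact: noiseA_mean.
by move=> *; apply: noiseA_norm_le.
Qed.

Lemma accG_expect_le k : aug_expect k (fun st => supnorm (accG st)) <= noise_level.
Proof.
apply: acc_norm_expect_le => s a; apply: (acc_sqr_expect_le _ noise_gap) => //.
  exact: noise_gap_mean.
by move=> *; apply: noise_gap_norm_le.
Qed.

Lemma devG_expect_le k : aug_expect k (fun st => supnorm (devG st)) <=
  rate ^+ k * 2 + alpha * gamma * noise_level / (1 - rate).
Proof.
set u := fun k => aug_expect k (fun st => supnorm (devG st)).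
have ag0 : 0 <= alpha * gamma by rewrite mulr_ge0 ?ltW.
have c0 : 0 <= alpha * gamma * noise_level := mulr_ge0 ag0 (ltW noise_level_gt0).
have u0 : u 0%N <= 2.
  rewrite /u /aug_expect iid_expect0 /=; apply: supnorm_le => // s a; rewrite /devG /= subr0.
  by apply: le_trans (ler_normB _ _) _; have := QA0_le1 s a; have := QB0_le1 s a; lra.
have uS j : u j.+1 <= rate * u j + alpha * gamma * noise_level + 0 * rate ^+ j.
  rewrite mul0r addr0; apply: le_trans (aug_expectS_le j _
    (fun st => rate * supnorm (devG st) + alpha * gamma * supnorm (accG st)) _) _.
    by move=> t; apply: sample_mean_le => x; apply: devG_contract.
  by rewrite aug_expect_lin lerD2l; apply: ler_wpM2l => //; apply: accG_expect_le.
have rate01 : 0 <= rate < 1 by rewrite rate_ge0 rate_lt1.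
by have := @linear_recursion_bound _ u _ _ _ _ rate01 (lexx 0) c0 u0 uS k; rewrite mul0r addr0.
Qed.

Definition driftA : R :=
  alpha * gamma * (3 * noise_level + 2 * (alpha * gamma * noise_level / (1 - rate))).

Lemma devA_expect_le k : aug_expect k (fun st => supnorm (devA st)) <=
  rate ^+ k * (1 + qmax) + driftA / (1 - rate) + 4 * alpha * gamma * (k%:R * rate ^+ k.-1).
Proof.
set u := fun k => aug_expect k (fun st => supnorm (devA st)).
have ag0 : 0 <= alpha * gamma by rewrite mulr_ge0 ?ltW.
have nu0 := ltW noise_level_gt0.
have rate1 : 0 < 1 - rate by rewrite subr_gt0 rate_lt1.
have drift0 : 0 <= driftA.
  rewrite /driftA mulr_ge0 // addr_ge0 //; first by rewrite mulr_ge0 ?ler0n.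
  by rewrite mulr_ge0 ?ler0n // divr_ge0 ?(ltW rate1) // mulr_ge0.
have u0 : u 0%N <= 1 + qmax.
  rewrite /u /aug_expect iid_expect0 /=; apply: supnorm_le => [|s a].
    by rewrite addr_ge0 ?(le_trans ler01 qmax_ge1).
  rewrite /devA /= subr0; apply: le_trans (ler_normB _ _) _.
  by rewrite lerD ?QA0_le1 ?Qstar_bounded.
have uS j : u j.+1 <= rate * u j + driftA + (4 * alpha * gamma) * rate ^+ j.
  apply: le_trans (aug_expectS_le j _ (fun st => rate * supnorm (devA st) + alpha * gamma *
    (supnorm (accA st) + 2 * supnorm (devG st) + 2 * supnorm (accG st))) _) _.
    by move=> t; apply: sample_mean_le => x; apply: devA_contract.
  rewrite aug_expect_lin -addrA lerD2l.
  rewrite (_ : aug_expect j _ = aug_expect j (fun st => supnorm (accA st))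
    + 2 * aug_expect j (fun st => supnorm (devG st))
    + 2 * aug_expect j (fun st => supnorm (accG st))).
    have := accA_expect_le j; have := devG_expect_le j; have := accG_expect_le j.
    rewrite /driftA => *; nra.
  by rewrite /aug_expect !iid_expectD !iid_expectZ.
have rate01 : 0 <= rate < 1 by rewrite rate_ge0 rate_lt1.
have b0 : 0 <= 4 * alpha * gamma by rewrite -mulrA mulr_ge0.
exact: (@linear_recursion_bound _ u _ _ _ _ rate01 b0 drift0 u0 uS k).
Qed.

Lemma sdq_errA_expect_le k :
  sdq_expect d P sel r gamma alpha QQ0 k (fun QQ => supnorm (fun s a => QQ.1 s a - Qstar s a))
  <= rate ^+ k * (1 + qmax) + driftA / (1 - rate) + 4 * alpha * gamma * (k%:R * rate ^+ k.-1)
     + noise_level.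
Proof.
have -> : sdq_expect d P sel r gamma alpha QQ0 k
    (fun QQ => supnorm (fun s a => QQ.1 s a - Qstar s a))
    = aug_expect k (fun st => supnorm (fun s a => devA st s a + accA st s a)).
  apply: eq_bigr => t _; rewrite -aug_run_est; congr (_ * supnorm _).
  by apply/funext => s; apply/funext => a; rewrite /devA; ring.
apply: le_trans (_ : aug_expect k (fun st => supnorm (devA st) + supnorm (accA st)) <= _).
  by apply: (ler_iid_expect _ sample_prob_ge0) => t; apply: supnormD_le.
by rewrite /aug_expect iid_expectD lerD ?devA_expect_le ?accA_expect_le.
Qed.

Lemma sdq_errA_expect_bound k :
  sdq_expect d P sel r gamma alpha QQ0 k (fun QQ => supnorm (fun s a => QQ.1 s a - Qstar s a))
  <= 120 * powR alpha (1/2) * nSA / (powR dm (9/2) * powR (1 - gamma) (11/2))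
     + 48 * powR nSA (3/2) / (1 - gamma) * (powR rate (-4) * (-8) ^+ 4 / (ln rate) ^+ 4)
       * powR rate (-4 / ln rate) * powR rate (k%:R / 2).
Proof.
apply: le_trans (sdq_errA_expect_le k) _.
have g01 : 0 < gamma < 1 by rewrite gamma0 gamma1.
have al01 : 0 < alpha < 1 by rewrite alpha0 alpha1.
have dm01 : 0 < dm <= 1 by rewrite dmin_gt0 dmin_le1.
have := stationary_terms_le g01 al01 dm01 card_SA_ge1.
have := transient_terms_le k g01 al01 dm01 card_SA_ge1.
rewrite /driftA /noise_level /qmax (_ : 1 - rate = alpha * dm * (1 - gamma)) /rate; last first.
  by rewrite /rate; ring.
lra.
Qed.

End DoubleQ.

Theorem corollary1 (R : realType) (S A : finType)
  (P : S -> A -> S -> R) (r : S -> A -> S -> R) (gamma alpha : R)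
  (p : S -> R) (beta : S -> A -> R) (d : S -> A -> R)
  (Qstar : S -> A -> R) (sel : (A -> R) -> A) (Q0A Q0B : S -> A -> R) :
  is_kernel P ->
  (forall s a s', `|r s a s'| <= 1) ->
  0 < gamma < 1 ->
  0 < alpha < 1 ->
  is_distr p -> is_policy beta ->
  stationary P beta p -> ergodic_chain P beta ->
  (forall s a, d s a = p s * beta s a) ->
  (forall s a, 0 < d s a) ->
  bellman_optimal P r gamma Qstar ->
  (forall (F : A -> R) a, F a <= F (sel F)) ->
  supnorm Q0A <= 1 -> supnorm Q0B <= 1 ->
  let dm := dmin d in
  let rho := 1 - alpha * dm * (1 - gamma) in
  let nSA : R := #|{: S * A}|%:R in
  forall k : nat,
  let bound :=
    120 * powR alpha (1/2) * nSA / (powR dm (9/2) * powR (1 - gamma) (11/2))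
    + 48 * powR nSA (3/2) / (1 - gamma)
      * (powR rho (-4) * (-8) ^+ 4 / (ln rho) ^+ 4)
      * powR rho (-4 / ln rho) * powR rho (k%:R / 2) in
  sdq_expect d P sel r gamma alpha (Q0A, Q0B) k
    (fun QQ => supnorm (fun s a => QQ.1 s a - Qstar s a)) <= bound /\
  sdq_expect d P sel r gamma alpha (Q0A, Q0B) k
    (fun QQ => supnorm (fun s a => QQ.2 s a - Qstar s a)) <= bound.
Proof.
move=> P_kernel r_le1 /andP[gamma0 gamma1] /andP[alpha0 alpha1] p_distr beta_policy _ _
  d_pbeta d_gt0 Qstar_opt sel_max QA0_le1 QB0_le1 dm rho nSA k bound.
have errA_bound := sdq_errA_expect_bound P_kernel r_le1 gamma0 gamma1 alpha0 alpha1 d_gt0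
  (occupancy_sum1 p_distr beta_policy d_pbeta) sel_max (bellman_optimal_sel sel_max Qstar_opt).
have [QA0 QB0] : (forall s a, `|Q0A s a| <= 1) /\ (forall s a, `|Q0B s a| <= 1).
  by split=> s a; apply: le_trans (ler_supnorm _ s a) _.
split; first exact: (errA_bound (Q0A, Q0B) QA0 QB0 k).
rewrite (_ : sdq_expect _ _ _ _ _ _ _ _ _ =
  sdq_expect d P sel r gamma alpha (Q0B, Q0A) k
    (fun QQ => supnorm (fun s a => QQ.1 s a - Qstar s a))).
  exact: (errA_bound (Q0B, Q0A) QB0 QA0 k).
by apply: eq_bigr => t _; rewrite sdq_run_swap.
Qed.
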